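(* As $N\to\infty$, $$\frac{1}{N}\sum_{n\le N} R_4(n)\sim \frac{1}{6}\log^3 N .$$
   Context: For a positive integer $n$, $R_4(n)$ denotes the number of ordered quadruples $(x,y,z,w)$ of positive integers with $n = xyzw + x + y + z + w$. *)

From Stdlib Require Import Reals Arith.
From Coquelicot Require Import Coquelicot.

Fixpoint sum_from_1 (f : nat -> nat) (k : nat) : nat :=
  match k with
  | 0 => 0%nat
  | S k' => (sum_from_1 f k' + f (S k'))%nat
  end.

(* R_4(n) = #{(x,y,z,w) positive integers : n = xyzw + x + y + z + w}.
   Any solution has x,y,z,w <= n, so counting over [1,n]^4 is exact. *)
Definition R4 (n : nat) : nat :=
  sum_from_1 (fun x =>
  sum_from_1 (fun y =>
  sum_from_1 (fun z =>
  sum_from_1 (fun w =>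
    if Nat.eqb n ((x * y * z * w + x + y + z + w)%nat) then 1%nat else 0%nat) n) n) n) n.

From Stdlib Require Import Reals Lra Lia Psatz Arith.
From Coquelicot Require Import Coquelicot.

(* Summing R_4 over n <= N counts the quadruples with xyzw + x + y + z + w <= N; for fixed
   x, y, z there are floor((N - x - y - z) / (xyz + 1)) choices of w.  With a = xyz this
   quotient lies between floor(N/a) - floor(N/a^2) - 4 and floor(N/a), so the partial sum
   is squeezed between D_4(N) - 8N - 4 D_3(N) and D_4(N), where D_k(N) counts the k-tuples
   of positive integers with product at most N.  The recursion
   D_{k+1}(x) = sum_{n <= x} D_k(x/n), together with the comparison of
   sum_{n <= x} (1/n) p(log(x/n)) with the integral of p, gives
   D_4(x) = x log^3 x / 6 + O(x log^2 x) and D_3(x) = O(x log^2 x). *)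

Lemma sum_from_1_ext f g K : (forall i, 1 <= i <= K -> f i = g i)%nat ->
  sum_from_1 f K = sum_from_1 g K.
Proof.
  induction K as [|K IH]; intros Hfg; simpl; auto.
  rewrite IH by (intros; apply Hfg; lia). rewrite Hfg by lia. reflexivity.
Qed.

Lemma sum_from_1_le f g K : (forall i, 1 <= i <= K -> f i <= g i)%nat ->
  (sum_from_1 f K <= sum_from_1 g K)%nat.
Proof.
  induction K as [|K IH]; intros Hfg; simpl; auto.
  assert (sum_from_1 f K <= sum_from_1 g K)%nat by (apply IH; intros; apply Hfg; lia).
  specialize (Hfg (S K)). lia.
Qed.

Lemma sum_from_1_zero f K : (forall i, 1 <= i <= K -> f i = 0)%nat -> sum_from_1 f K = 0%nat.
Proof.
  induction K as [|K IH]; intros Hf; simpl; auto.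
  rewrite IH by (intros; apply Hf; lia). rewrite Hf by lia. reflexivity.
Qed.

Lemma sum_from_1_widen f g n K :
  (forall i, 1 <= i <= n -> f i = g i)%nat -> (n <= K)%nat -> (forall i, n < i <= K -> g i = 0)%nat ->
  sum_from_1 f n = sum_from_1 g K.
Proof.
  intros Hfg. induction K as [|K IH]; intros HnK Hg.
  - replace n with 0%nat by lia. reflexivity.
  - destruct (Nat.eq_dec n (S K)) as [->|HnK'].
    + apply sum_from_1_ext; auto.
    + simpl. rewrite IH by (lia || (intros; apply Hg; lia)). rewrite Hg by lia. lia.
Qed.

Lemma sum_from_1_add f g K :
  sum_from_1 (fun i => f i + g i)%nat K = (sum_from_1 f K + sum_from_1 g K)%nat.
Proof. induction K as [|K IH]; simpl; [lia | rewrite IH; lia]. Qed.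

Lemma sum_from_1_mul_l c f K :
  sum_from_1 (fun i => c * f i)%nat K = (c * sum_from_1 f K)%nat.
Proof. induction K as [|K IH]; simpl; [lia | rewrite IH; lia]. Qed.

Lemma sum_from_1_swap (f : nat -> nat -> nat) A B :
  sum_from_1 (fun i => sum_from_1 (fun j => f i j) B) A =
  sum_from_1 (fun j => sum_from_1 (fun i => f i j) A) B.
Proof.
  induction A as [|A IH]; simpl.
  - symmetry; apply sum_from_1_zero; auto.
  - rewrite IH, <- sum_from_1_add. reflexivity.
Qed.

Lemma sum_from_1_indicator_eq t K : (1 <= t)%nat ->
  sum_from_1 (fun n => if Nat.eqb n t then 1 else 0)%nat K = (if Nat.leb t K then 1 else 0)%nat.
Proof.
  intros Ht. induction K as [|K IH]; cbn [sum_from_1].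
  - destruct t; [lia | reflexivity].
  - rewrite IH. destruct (Nat.eqb_spec (S K) t), (Nat.leb_spec t K), (Nat.leb_spec t (S K)); lia.
Qed.

Lemma sum_from_1_indicator_le q K : (q <= K)%nat ->
  sum_from_1 (fun w => if Nat.leb w q then 1 else 0)%nat K = q.
Proof.
  intros HqK. rewrite <- (sum_from_1_widen (fun _ => 1%nat) _ q K); auto.
  - clear HqK. induction q as [|q IH]; simpl; lia.
  - intros w Hw. destruct (Nat.leb_spec w q); lia.
  - intros w Hw. destruct (Nat.leb_spec w q); lia.
Qed.

Lemma le_div_iff c w M : (1 <= c)%nat -> (c * w <= M <-> w <= M / c)%nat.
Proof.
  intros Hc. split; intros H.
  - apply Nat.div_le_lower_bound; lia.
  - pose proof (Nat.Div0.mul_div_le M c). nia.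
Qed.

Definition sum3 (f : nat -> nat -> nat -> nat) K :=
  sum_from_1 (fun x => sum_from_1 (fun y => sum_from_1 (fun z => f x y z) K) K) K.

Lemma sum3_le f g K :
  (forall x y z, 1 <= x -> 1 <= y -> 1 <= z -> f x y z <= g x y z)%nat ->
  (sum3 f K <= sum3 g K)%nat.
Proof.
  intros Hfg. unfold sum3.
  do 3 (apply sum_from_1_le; intros ? ?). apply Hfg; lia.
Qed.

Lemma sum3_add f g K :
  sum3 (fun x y z => f x y z + g x y z)%nat K = (sum3 f K + sum3 g K)%nat.
Proof.
  unfold sum3. rewrite <- sum_from_1_add.
  apply sum_from_1_ext; intros. rewrite <- sum_from_1_add.
  apply sum_from_1_ext; intros. apply sum_from_1_add.
Qed.

Lemma sum3_mul_l c f K : sum3 (fun x y z => c * f x y z)%nat K = (c * sum3 f K)%nat.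
Proof.
  unfold sum3. rewrite <- sum_from_1_mul_l.
  apply sum_from_1_ext; intros. rewrite <- sum_from_1_mul_l.
  apply sum_from_1_ext; intros. apply sum_from_1_mul_l.
Qed.

Lemma R4_widen n K : (n <= K)%nat ->
  R4 n = sum3 (fun x y z => sum_from_1 (fun w =>
    if Nat.eqb n (x * y * z * w + x + y + z + w) then 1 else 0)%nat K) K.
Proof.
  intros HnK. unfold R4, sum3.
  assert (Hzero : forall x y z w, (n < x \/ n < y \/ n < z \/ n < w)%nat ->
    (if Nat.eqb n (x * y * z * w + x + y + z + w) then 1 else 0)%nat = 0%nat).
  { intros x y z w Hlt. destruct (Nat.eqb_spec n (x * y * z * w + x + y + z + w)); lia. }
  apply sum_from_1_widen; [intros x _ | lia |
    intros x Hx; repeat (apply sum_from_1_zero; intros); apply Hzero; lia].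
  apply sum_from_1_widen; [intros y _ | lia |
    intros y Hy; repeat (apply sum_from_1_zero; intros); apply Hzero; lia].
  apply sum_from_1_widen; [intros z _ | lia |
    intros z Hz; repeat (apply sum_from_1_zero; intros); apply Hzero; lia].
  apply sum_from_1_widen; [reflexivity | lia | intros w Hw; apply Hzero; lia].
Qed.

(* For fixed x, y, z the admissible w are those with (xyz + 1) w <= N - (x + y + z). *)
Lemma sum_R4_eq N :
  sum_from_1 R4 N = sum3 (fun x y z => (N - (x + y + z)) / (x * y * z + 1))%nat N.
Proof.
  rewrite (sum_from_1_ext _ _ N (fun n _ => R4_widen n N ltac:(lia))).
  unfold sum3. rewrite sum_from_1_swap. apply sum_from_1_ext; intros x _.
  rewrite sum_from_1_swap. apply sum_from_1_ext; intros y _.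
  rewrite sum_from_1_swap. apply sum_from_1_ext; intros z Hz.
  rewrite sum_from_1_swap.
  set (q := ((N - (x + y + z)) / (x * y * z + 1))%nat).
  rewrite <- (sum_from_1_indicator_le q N) by (apply Nat.Div0.div_le_upper_bound; nia).
  apply sum_from_1_ext; intros w Hw.
  rewrite sum_from_1_indicator_eq by lia.
  pose proof (le_div_iff (x * y * z + 1) w (N - (x + y + z)) ltac:(lia)) as Hq.
  destruct (Nat.leb_spec (x * y * z * w + x + y + z + w) N) as [Hn | Hn],
    (Nat.leb_spec w q) as [Hwq | Hwq]; [reflexivity | | | reflexivity]; exfalso.
  - assert (w <= q)%nat by (apply Hq; nia). lia.
  - apply Hq in Hwq. nia.
Qed.

(* Dsum k M = #{(n_1, ..., n_k) positive integers : n_1 ... n_k <= M}, the divisor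
   summatory function D_k(M). *)
Fixpoint Dsum (k M : nat) : nat :=
  match k with
  | 0 => if Nat.eqb M 0 then 0 else 1
  | S k' => sum_from_1 (fun n => Dsum k' (M / n)) M
  end.

Lemma Dsum_0_r k : Dsum k 0 = 0%nat.
Proof. destruct k; reflexivity. Qed.

Lemma Dsum_1 M : Dsum 1 M = M.
Proof.
  simpl. transitivity (sum_from_1 (fun n => if Nat.leb n M then 1 else 0)%nat M).
  - apply sum_from_1_ext; intros n Hn.
    assert (1 <= M / n)%nat by (apply le_div_iff; lia).
    destruct (Nat.eqb_spec (M / n) 0), (Nat.leb_spec n M); lia.
  - apply sum_from_1_indicator_le; lia.
Qed.

Lemma sum_Dsum_div k a M K : (1 <= a)%nat -> (M <= K)%nat ->
  sum_from_1 (fun n => Dsum k (M / (a * n))) K = Dsum (S k) (M / a).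
Proof.
  intros Ha HK. simpl. symmetry. apply sum_from_1_widen.
  - intros n _. rewrite Nat.Div0.div_div. reflexivity.
  - apply Nat.Div0.div_le_upper_bound. nia.
  - intros n Hn. rewrite <- Nat.Div0.div_div, Nat.div_small by lia. apply Dsum_0_r.
Qed.

Lemma sum3_Dsum k N K : (N <= K)%nat ->
  sum3 (fun x y z => Dsum k (N / (x * y * z))) K = Dsum (S (S (S k))) N.
Proof.
  intros HK. unfold sum3.
  transitivity (sum_from_1 (fun x => Dsum (S (S k)) (N / (1 * x))) K).
  2:{ rewrite sum_Dsum_div, Nat.div_1_r by lia. reflexivity. }
  apply sum_from_1_ext; intros x Hx. rewrite Nat.mul_1_l, <- (sum_Dsum_div _ x N K) by lia.
  apply sum_from_1_ext; intros y Hy. rewrite <- (sum_Dsum_div _ (x * y) N K) by nia.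
  apply sum_from_1_ext; intros z Hz. reflexivity.
Qed.

Lemma prod3_pos x y z : (1 <= x)%nat -> (1 <= y)%nat -> (1 <= z)%nat -> (1 <= x * y * z)%nat.
Proof. intros. apply Nat.mul_pos_pos; [apply Nat.mul_pos_pos |]; lia. Qed.

Lemma sum_le_3_prod x y z : (1 <= x)%nat -> (1 <= y)%nat -> (1 <= z)%nat ->
  (x + y + z <= 3 * (x * y * z))%nat.
Proof.
  intros Hx Hy Hz.
  assert (1 <= y * z)%nat by nia. assert (1 <= x * z)%nat by nia. assert (1 <= x * y)%nat by nia.
  assert (x <= x * y * z)%nat by (rewrite <- Nat.mul_assoc; nia).
  assert (y <= x * y * z)%nat by (rewrite (Nat.mul_comm x y), <- Nat.mul_assoc; nia).
  assert (z <= x * y * z)%nat by nia.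
  lia.
Qed.

(* With p = N / a, q = (N - s) / (a + 1) and r = N / a^2: (a + 1)(q + 1) > N - s >= a p - 3 a,
   and a q <= N < a^2 (r + 1) gives q < a (r + 1); together p < q + r + 5. *)
Lemma div_le_div_succ_sub N s a : (1 <= a)%nat -> (s <= 3 * a)%nat ->
  (N / a <= (N - s) / (a + 1) + N / (a * a) + 4)%nat.
Proof.
  intros Ha Hs.
  pose proof (Nat.div_mod N a ltac:(lia)). pose proof (Nat.mod_upper_bound N a ltac:(lia)).
  pose proof (Nat.div_mod (N - s) (a + 1) ltac:(lia)).
  pose proof (Nat.mod_upper_bound (N - s) (a + 1) ltac:(lia)).
  pose proof (Nat.div_mod N (a * a) ltac:(nia)). pose proof (Nat.mod_upper_bound N (a * a) ltac:(nia)).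
  set (p := (N / a)%nat) in *. set (q := ((N - s) / (a + 1))%nat) in *.
  set (r := (N / (a * a))%nat) in *.
  assert (Hq : (q + 1 <= a * (r + 1))%nat).
  { assert (q * a < a * a * (r + 1))%nat by nia. nia. }
  assert (a * p < a * (q + r + 5))%nat by nia.
  nia.
Qed.

Lemma sum_R4_le_Dsum4 N : (sum_from_1 R4 N <= Dsum 4 N)%nat.
Proof.
  rewrite sum_R4_eq, <- (sum3_Dsum 1 N N) by lia.
  apply sum3_le; intros x y z Hx Hy Hz. rewrite Dsum_1.
  pose proof (prod3_pos x y z Hx Hy Hz).
  apply Nat.le_trans with (N / (x * y * z + 1))%nat.
  - apply Nat.Div0.div_le_mono; lia.
  - apply Nat.div_le_compat_l; lia.
Qed.

Lemma Dsum4_le_sum_R4 N :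
  (Dsum 4 N <= sum_from_1 R4 N + sum3 (fun x y z => N / (x * y * z * (x * y * z))) N
                + 4 * Dsum 3 N)%nat.
Proof.
  rewrite sum_R4_eq, <- (sum3_Dsum 1 N N), <- (sum3_Dsum 0 N N) by lia.
  rewrite <- sum3_mul_l, <- !sum3_add.
  apply sum3_le; intros x y z Hx Hy Hz. rewrite Dsum_1. cbn [Dsum].
  pose proof (prod3_pos x y z Hx Hy Hz).
  destruct (Nat.eqb_spec (N / (x * y * z)) 0) as [Hzero | _]; [lia |].
  pose proof (div_le_div_succ_sub N (x + y + z) (x * y * z) ltac:(assumption)
    (sum_le_3_prod x y z Hx Hy Hz)).
  lia.
Qed.

Open Scope R_scope.

Fixpoint rsum (f : nat -> R) (k : nat) : R :=
  match k with 0 => 0 | S k' => rsum f k' + f (S k') end.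

Lemma INR_sum_from_1 f K : INR (sum_from_1 f K) = rsum (fun i => INR (f i)) K.
Proof. induction K as [|K IH]; simpl; auto. rewrite plus_INR, IH. reflexivity. Qed.

Lemma rsum_le f g K : (forall i, (1 <= i <= K)%nat -> f i <= g i) -> rsum f K <= rsum g K.
Proof.
  induction K as [|K IH]; intros Hfg; simpl; [lra |].
  assert (rsum f K <= rsum g K) by (apply IH; intros; apply Hfg; lia).
  specialize (Hfg (S K) ltac:(lia)). lra.
Qed.

Lemma rsum_scal_l c f K : rsum (fun i => c * f i) K = c * rsum f K.
Proof. induction K as [|K IH]; simpl; [ring | rewrite IH; ring]. Qed.

Lemma rsum_minus f g K : rsum (fun i => f i - g i) K = rsum f K - rsum g K.
Proof. induction K as [|K IH]; simpl; [ring | rewrite IH; ring]. Qed.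

Lemma rsum_const_1 K : rsum (fun _ => 1) K = INR K.
Proof. induction K as [|K IH]; simpl rsum; [reflexivity | rewrite IH, S_INR; ring]. Qed.

Lemma inv_sq_le_telescope r : 1 <= r -> / (r * r) <= 2 * (/ r - / (r + 1)).
Proof.
  intros Hr.
  assert (E : 2 * (/ r - / (r + 1)) - / (r * r) = (r - 1) / (r * r * (r + 1))) by (field; lra).
  assert (0 <= (r - 1) / (r * r * (r + 1))).
  { apply Rmult_le_pos; [lra | apply Rlt_le, Rinv_0_lt_compat; nra]. }
  lra.
Qed.

Lemma rsum_inv_sq_le K : rsum (fun i => / (INR i * INR i)) K <= 2 - 2 / INR (S K).
Proof.
  induction K as [|K IH]; cbn [rsum].
  - simpl. lra.
  - assert (1 <= INR (S K)) by (apply (le_INR 1); lia).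
    pose proof (inv_sq_le_telescope (INR (S K)) ltac:(assumption)).
    rewrite (S_INR (S K)). unfold Rdiv in *. lra.
Qed.

Lemma rsum_le_inv_sq c f K : 0 <= c ->
  (forall i, (1 <= i <= K)%nat -> f i <= c * / (INR i * INR i)) -> rsum f K <= 2 * c.
Proof.
  intros Hc Hf. eapply Rle_trans; [apply rsum_le, Hf |].
  rewrite rsum_scal_l. pose proof (rsum_inv_sq_le K).
  assert (0 < 2 / INR (S K)) by (apply Rdiv_lt_0_compat; [lra | apply lt_0_INR; lia]).
  nra.
Qed.

Lemma ln_le_sub_1 y : 0 < y -> ln y <= y - 1.
Proof. intros Hy. pose proof (exp_ineq1_le (ln y)). rewrite exp_ln in *; lra. Qed.

Lemma ln_succ_sub_bounds m : (1 <= m)%nat ->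
  / INR (S m) <= ln (INR (S m)) - ln (INR m) <= / INR m.
Proof.
  intros Hm. assert (1 <= INR m) by (apply (le_INR 1); auto).
  rewrite S_INR. split.
  - pose proof (ln_le_sub_1 (INR m / (INR m + 1)) ltac:(apply Rdiv_lt_0_compat; lra)) as Hl.
    rewrite ln_div in Hl by lra.
    replace (INR m / (INR m + 1) - 1) with (- / (INR m + 1)) in Hl by (field; lra). lra.
  - pose proof (ln_le_sub_1 ((INR m + 1) / INR m) ltac:(apply Rdiv_lt_0_compat; lra)) as Hl.
    rewrite ln_div in Hl by lra.
    replace ((INR m + 1) / INR m - 1) with (/ INR m) in Hl by (field; lra). lra.
Qed.

Definition log_term (h : R -> R) (x : R) (n : nat) := / INR n * h (ln x - ln (INR n)).

Lemma ln_sub_ln_nonneg x n : (1 <= n)%nat -> INR n <= x -> 0 <= ln x - ln (INR n).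
Proof.
  intros Hn Hx. assert (1 <= INR n) by (apply (le_INR 1); auto).
  pose proof (ln_le (INR n) x ltac:(lra) Hx). lra.
Qed.

(* Each summand is at most the increment of H over [ln(x/(m+1)), ln(x/m)], whose length
   exceeds 1/(m+1); the sum telescopes. *)
Lemma rsum_log_term_le h H x M :
  (forall u, 0 <= u -> 0 <= h u) ->
  (forall a b, 0 <= b <= a -> (a - b) * h b <= H a - H b) ->
  INR M <= x -> (1 <= M)%nat ->
  rsum (log_term h x) M <= h (ln x) + H (ln x) - H (ln x - ln (INR M)).
Proof.
  intros Hh HH. induction M as [|[|m] IH]; intros Hx HM; [lia | |].
  - cbn [rsum]. unfold log_term. simpl INR. rewrite ln_1, Rinv_1, Rminus_0_r. lra.
  - change (rsum (log_term h x) (S (S m)))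
      with (rsum (log_term h x) (S m) + / INR (S (S m)) * h (ln x - ln (INR (S (S m))))).
    assert (Hm : INR (S m) <= x) by (rewrite S_INR in Hx; lra).
    specialize (IH Hm ltac:(lia)).
    pose proof (ln_succ_sub_bounds (S m) ltac:(lia)) as Hln.
    pose proof (ln_sub_ln_nonneg x (S (S m)) ltac:(lia) Hx) as Hb.
    set (a := ln x - ln (INR (S m))) in *. set (b := ln x - ln (INR (S (S m)))) in *.
    assert (Hab : a - b = ln (INR (S (S m))) - ln (INR (S m))) by (unfold a, b; ring).
    assert (0 < / INR (S (S m))) by (apply Rinv_0_lt_compat, lt_0_INR; lia).
    pose proof (HH a b ltac:(lra)). pose proof (Hh b Hb).
    assert (/ INR (S (S m)) * h b <= (a - b) * h b) by (apply Rmult_le_compat_r; lra).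
    lra.
Qed.

(* Each summand pays for the increment of H over [ln(x/(m+1)), ln(x/m)] up to the
   telescoping error (c - 2 k) (1/m - 1/(m+1)). *)
Lemma rsum_log_term_ge_partial h H c k x m :
  c <= 0 -> 0 <= k -> (forall u, 0 <= u -> c <= h u) ->
  (forall a b, 0 <= b <= a -> H a - H b <= (a - b) * h a + k * ((a - b) * (a - b))) ->
  INR (S m) <= x ->
  H (ln x) - H (ln x - ln (INR (S m))) + (c - 2 * k) * (1 - / INR (S m))
    <= rsum (log_term h x) m.
Proof.
  intros Hc Hk Hh HH. induction m as [|m IH]; intros Hx.
  - simpl. rewrite ln_1, Rinv_1, Rminus_0_r. lra.
  - change (rsum (log_term h x) (S m))
      with (rsum (log_term h x) m + / INR (S m) * h (ln x - ln (INR (S m)))).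
    assert (Hm : INR (S m) <= x) by (rewrite S_INR in Hx; lra).
    specialize (IH Hm).
    pose proof (ln_succ_sub_bounds (S m) ltac:(lia)) as Hln.
    pose proof (ln_sub_ln_nonneg x (S (S m)) ltac:(lia) Hx) as Hb.
    assert (Hr : 1 <= INR (S m)) by (apply (le_INR 1); lia).
    pose proof (inv_sq_le_telescope (INR (S m)) Hr) as Hsq.
    rewrite <- S_INR, Rinv_mult in Hsq.
    assert (0 < / INR (S (S m))) by (apply Rinv_0_lt_compat, lt_0_INR; lia).
    set (a := ln x - ln (INR (S m))) in *. set (b := ln x - ln (INR (S (S m)))) in *.
    assert (Hab : a - b = ln (INR (S (S m))) - ln (INR (S m))) by (unfold a, b; ring).
    pose proof (HH a b ltac:(lra)) as HHab. pose proof (Hh a ltac:(lra)) as Hha.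
    set (u := / INR (S m)) in *. set (v := / INR (S (S m))) in *.
    assert (0 <= (u - (a - b)) * (h a - c)) by (apply Rmult_le_pos; lra).
    assert (c * ((a - b) - v) <= 0) by (apply Rmult_le_0_r; lra).
    assert ((a - b) * (a - b) <= u * u) by (apply Rmult_le_compat; lra).
    assert (k * ((a - b) * (a - b)) <= k * (2 * (u - v))) by (apply Rmult_le_compat_l; lra).
    nra.
Qed.

Lemma rsum_log_term_ge h H c k x M :
  c <= 0 -> 0 <= k -> (forall u, 0 <= u -> c <= h u) ->
  (forall a b, 0 <= b <= a -> H a - H b <= (a - b) * h a + k * ((a - b) * (a - b))) ->
  INR M <= x -> (1 <= M)%nat ->
  H (ln x) - H (ln x - ln (INR M)) + c - 2 * k <= rsum (log_term h x) M.
Proof.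
  intros Hc Hk Hh HH Hx HM. destruct M as [|m]; [lia |].
  pose proof (rsum_log_term_ge_partial h H c k x m Hc Hk Hh HH Hx) as Hpart.
  change (rsum (log_term h x) (S m))
    with (rsum (log_term h x) m + / INR (S m) * h (ln x - ln (INR (S m)))).
  pose proof (Hh _ (ln_sub_ln_nonneg x (S m) HM Hx)) as Hhb.
  assert (1 <= INR (S m)) by (apply (le_INR 1); lia).
  assert (0 < / INR (S m) <= 1) by (split; [apply Rinv_0_lt_compat; lra | rewrite <- Rinv_1; apply Rinv_le_contravar; lra]).
  assert (/ INR (S m) * c <= / INR (S m) * h (ln x - ln (INR (S m))))
    by (apply Rmult_le_compat_l; lra).
  nra.
Qed.

Definition nat_floor (x : R) (M : nat) := 1 <= x /\ INR M <= x < INR M + 1.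

Lemma nat_floor_pos x M : nat_floor x M -> (1 <= M)%nat.
Proof. intros [Hx [_ HxM]]. destruct M; [simpl in HxM; lra | lia]. Qed.

Lemma nat_floor_ln_gap x M : nat_floor x M -> 0 <= ln x - ln (INR M) <= 1.
Proof.
  intros Hf. pose proof (nat_floor_pos _ _ Hf). destruct Hf as [Hx [HMx HxM]].
  assert (1 <= INR M) by (apply (le_INR 1); auto).
  split; [apply ln_sub_ln_nonneg; auto |].
  assert (Hx2 : x <= 2 * INR M) by lra.
  pose proof (ln_le x (2 * INR M) ltac:(lra) Hx2) as Hl. rewrite ln_mult in Hl by lra.
  pose proof (ln_le_sub_1 2 ltac:(lra)). lra.
Qed.

Lemma nat_floor_div x M n : nat_floor x M -> (1 <= n <= M)%nat ->
  nat_floor (x / INR n) (M / n) /\ ln (x / INR n) = ln x - ln (INR n).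
Proof.
  intros Hf Hn. pose proof (nat_floor_pos _ _ Hf). destruct Hf as [Hx [HMx HxM]].
  assert (1 <= INR n) by (apply (le_INR 1); lia).
  assert (INR n <= INR M) by (apply le_INR; lia).
  split; [| apply ln_div; lra].
  pose proof (Nat.div_mod M n ltac:(lia)). pose proof (Nat.mod_upper_bound M n ltac:(lia)).
  assert (Hlo : (n * (M / n) <= M)%nat) by lia.
  assert (Hhi : (M + 1 <= n * (M / n + 1))%nat) by lia.
  apply le_INR in Hlo, Hhi. rewrite !mult_INR, !plus_INR in *. simpl INR in Hhi.
  assert (Hv : INR n * / INR n = 1) by (field; lra).
  assert (0 < / INR n) by (apply Rinv_0_lt_compat; lra).
  unfold nat_floor, Rdiv. set (q := INR (M / n)) in *. set (v := / INR n) in *.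
  repeat split; nra.
Qed.

Definition Dsum_le (k : nat) (p : R -> R) :=
  forall x M, nat_floor x M -> INR (Dsum k M) <= x * p (ln x).

Definition Dsum_ge (k : nat) (p : R -> R) :=
  forall x M, nat_floor x M -> x * p (ln x) <= INR (Dsum k M).

(* Bounding each D_k(M / n) by (x / n) h(ln(x / n)) makes D_{k+1}(M) / x a sum of log_terms. *)
Lemma Dsum_S_le k h H : Dsum_le k h ->
  (forall u, 0 <= u -> 0 <= h u) ->
  (forall a b, 0 <= b <= a -> (a - b) * h b <= H a - H b) ->
  forall x M, nat_floor x M ->
  INR (Dsum (S k) M) <= x * (h (ln x) + H (ln x) - H (ln x - ln (INR M))).
Proof.
  intros Hk Hh HH x M Hf. pose proof (nat_floor_pos _ _ Hf) as HM.
  cbn [Dsum]. rewrite INR_sum_from_1.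
  eapply Rle_trans.
  2:{ apply Rmult_le_compat_l; [destruct Hf; lra |]. apply rsum_log_term_le; auto; apply Hf. }
  rewrite <- rsum_scal_l. apply rsum_le. intros n Hn.
  destruct (nat_floor_div x M n Hf Hn) as [Hfn Hln].
  specialize (Hk _ _ Hfn). rewrite Hln in Hk.
  unfold log_term. unfold Rdiv in Hk. lra.
Qed.

Lemma Dsum_S_ge k h H c kk : Dsum_ge k h -> c <= 0 -> 0 <= kk ->
  (forall u, 0 <= u -> c <= h u) ->
  (forall a b, 0 <= b <= a -> H a - H b <= (a - b) * h a + kk * ((a - b) * (a - b))) ->
  forall x M, nat_floor x M ->
  x * (H (ln x) - H (ln x - ln (INR M)) + c - 2 * kk) <= INR (Dsum (S k) M).
Proof.
  intros Hk Hc Hkk Hh HH x M Hf. pose proof (nat_floor_pos _ _ Hf) as HM.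
  cbn [Dsum]. rewrite INR_sum_from_1.
  eapply Rle_trans.
  { apply Rmult_le_compat_l; [destruct Hf; lra |]. apply (rsum_log_term_ge h H c kk); auto; apply Hf. }
  rewrite <- rsum_scal_l. apply rsum_le. intros n Hn.
  destruct (nat_floor_div x M n Hf Hn) as [Hfn Hln].
  specialize (Hk _ _ Hfn). rewrite Hln in Hk.
  unfold log_term. unfold Rdiv in Hk. lra.
Qed.

Lemma Dsum1_le : Dsum_le 1 (fun _ => 1).
Proof. intros x M Hf. rewrite Dsum_1. destruct Hf; lra. Qed.

Lemma Dsum2_le : Dsum_le 2 (fun u => 1 + u).
Proof.
  intros x M Hf. pose proof (nat_floor_ln_gap _ _ Hf).
  pose proof (Dsum_S_le 1 (fun _ => 1) (fun u => u) Dsum1_le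
    ltac:(intros; lra) ltac:(intros; lra) x M Hf) as Hstep.
  destruct Hf as [Hx _]. nra.
Qed.

Lemma Dsum3_le : Dsum_le 3 (fun u => 1 + 2 * u + u * u / 2).
Proof.
  intros x M Hf. pose proof (nat_floor_ln_gap _ _ Hf).
  pose proof (Dsum_S_le 2 (fun u => 1 + u) (fun u => u + u * u / 2) Dsum2_le
    ltac:(intros; lra) ltac:(intros; nra) x M Hf) as Hstep.
  cbv beta in Hstep. set (t := ln x - ln (INR M)) in *.
  destruct Hf as [Hx _].
  assert (0 <= x * (t + t * t / 2)) by (apply Rmult_le_pos; nra).
  nra.
Qed.

Lemma Dsum4_le : Dsum_le 4 (fun u => 1 + 3 * u + 3 * (u * u) / 2 + u * u * u / 6).
Proof.
  intros x M Hf. pose proof (nat_floor_ln_gap _ _ Hf).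
  assert (HH : forall a b, 0 <= b <= a -> (a - b) * (1 + 2 * b + b * b / 2)
    <= (a + a * a + a * a * a / 6) - (b + b * b + b * b * b / 6)).
  { intros a b Hab. assert (0 <= (a - b) * (a + 2 * b)) by nra.
    assert (0 <= (a - b) * ((a - b) + (a - b) * (a + 2 * b) / 6)) by (apply Rmult_le_pos; nra).
    nra. }
  pose proof (Dsum_S_le 3 _ _ Dsum3_le ltac:(intros; nra) HH x M Hf) as Hstep.
  cbv beta in Hstep. set (t := ln x - ln (INR M)) in *.
  destruct Hf as [Hx _].
  assert (0 <= t * t * t) by (apply Rmult_le_pos; nra).
  assert (0 <= x * (t + t * t + t * t * t / 6)) by (apply Rmult_le_pos; nra).
  nra.
Qed.

Lemma Dsum2_ge : Dsum_ge 2 (fun u => u - 2).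
Proof.
  intros x M Hf. pose proof (nat_floor_ln_gap _ _ Hf). pose proof (nat_floor_pos _ _ Hf) as HM.
  change (Dsum 2 M) with (sum_from_1 (fun n => Dsum 1 (M / n)) M). rewrite INR_sum_from_1.
  apply Rle_trans with (rsum (fun n => x * log_term (fun _ => 1) x n - 1) M).
  2:{ apply rsum_le. intros n Hn. destruct (nat_floor_div x M n Hf Hn) as [[_ [_ Hlt]] _].
      rewrite Dsum_1. unfold log_term, Rdiv in *. lra. }
  rewrite rsum_minus, rsum_const_1, rsum_scal_l.
  pose proof (rsum_log_term_ge (fun _ => 1) (fun u => u) 0 0 x M ltac:(lra) ltac:(lra)
    ltac:(intros; lra) ltac:(intros; lra) ltac:(apply Hf) HM) as Hsum.
  destruct Hf as [Hx [HMx _]].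
  assert (x * (ln x - 1) <= x * rsum (log_term (fun _ => 1) x) M)
    by (apply Rmult_le_compat_l; lra).
  lra.
Qed.

Lemma Dsum3_ge : Dsum_ge 3 (fun u => u * u / 2 - 2 * u - 2).
Proof.
  intros x M Hf. pose proof (nat_floor_ln_gap _ _ Hf).
  pose proof (Dsum_S_ge 2 (fun u => u - 2) (fun u => u * u / 2 - 2 * u) (-2) 0 Dsum2_ge
    ltac:(lra) ltac:(lra) ltac:(intros; lra) ltac:(intros; nra) x M Hf) as Hstep.
  cbv beta in Hstep. set (t := ln x - ln (INR M)) in *.
  destruct Hf as [Hx _].
  assert (x * (t * t / 2 - 2 * t) <= 0) by (apply Rmult_le_0_l; nra).
  nra.
Qed.

Lemma Dsum4_ge : Dsum_ge 4 (fun u => u * u * u / 6 - u * u - 2 * u - 7).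
Proof.
  intros x M Hf. pose proof (nat_floor_ln_gap _ _ Hf).
  assert (HH : forall a b, 0 <= b <= a ->
    (a * a * a / 6 - a * a - 2 * a) - (b * b * b / 6 - b * b - 2 * b)
    <= (a - b) * (a * a / 2 - 2 * a - 2) + 1 * ((a - b) * (a - b))).
  { intros a b Hab. assert (0 <= ((a - b) * (a - b)) * (2 * a + b)) by (apply Rmult_le_pos; nra).
    nra. }
  assert (Hh : forall u, 0 <= u -> -4 <= u * u / 2 - 2 * u - 2).
  { intros u _. pose proof (Rle_0_sqr (u - 2)). unfold Rsqr in *. lra. }
  pose proof (Dsum_S_ge 3 _ _ (-4) 1 Dsum3_ge ltac:(lra) ltac:(lra) Hh HH x M Hf) as Hstep.
  cbv beta in Hstep. set (t := ln x - ln (INR M)) in *.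
  destruct Hf as [Hx _].
  assert (t * t * t <= 1) by (assert (t * t <= 1) by nra; nra).
  assert (x * (t * t * t / 6 - t * t - 2 * t) <= x) by nra.
  nra.
Qed.

Lemma INR_div_le N b : (1 <= b)%nat -> INR (N / b) <= INR N / INR b.
Proof.
  intros Hb. assert (Hle : (b * (N / b) <= N)%nat) by apply Nat.Div0.mul_div_le.
  apply le_INR in Hle. rewrite mult_INR in Hle.
  assert (1 <= INR b) by (apply (le_INR 1); auto).
  apply (Rmult_le_reg_l (INR b)); [lra |]. unfold Rdiv. rewrite <- Rmult_assoc.
  rewrite (Rmult_comm (INR b) (INR N)), Rmult_assoc, Rinv_r, Rmult_1_r by lra. exact Hle.
Qed.

Lemma sum3_div_sq_le N :
  INR (sum3 (fun x y z => N / (x * y * z * (x * y * z)))%nat N) <= 8 * INR N.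
Proof.
  pose proof (pos_INR N).
  unfold sum3. rewrite INR_sum_from_1.
  eapply Rle_trans; [apply (rsum_le_inv_sq (4 * INR N)); [lra |] | lra].
  intros x Hx. rewrite INR_sum_from_1.
  assert (1 <= INR x) by (apply (le_INR 1); lia).
  eapply Rle_trans; [apply (rsum_le_inv_sq (2 * INR N / (INR x * INR x))) |].
  { apply Rmult_le_pos; [lra | apply Rlt_le, Rinv_0_lt_compat; nra]. }
  2:{ right. field. lra. }
  intros y Hy. rewrite INR_sum_from_1.
  assert (1 <= INR y) by (apply (le_INR 1); lia).
  eapply Rle_trans; [apply (rsum_le_inv_sq (INR N / (INR x * INR x) / (INR y * INR y))) |].
  { unfold Rdiv. repeat apply Rmult_le_pos; try lra; apply Rlt_le, Rinv_0_lt_compat; nra. }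
  2:{ right. field. lra. }
  intros z Hz.
  assert (1 <= INR z) by (apply (le_INR 1); lia).
  eapply Rle_trans; [apply INR_div_le |].
  - pose proof (prod3_pos x y z ltac:(lia) ltac:(lia) ltac:(lia)). nia.
  - right. rewrite !mult_INR. field. repeat split; lra.
Qed.

Lemma nat_floor_INR N : (1 <= N)%nat -> nat_floor (INR N) N.
Proof. intros HN. assert (1 <= INR N) by (apply (le_INR 1); auto). unfold nat_floor; lra. Qed.

Lemma R4_average_cube_error N : (1 <= N)%nat ->
  Rabs (INR (sum_from_1 R4 N) / INR N - ln (INR N) ^ 3 / 6)
    <= 19 * (1 + ln (INR N) + ln (INR N) * ln (INR N)).
Proof.
  intros HN. pose proof (nat_floor_INR N HN) as Hf.
  pose proof (Dsum4_le _ _ Hf) as Hup. pose proof (Dsum4_ge _ _ Hf) as Hlo.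
  pose proof (Dsum3_le _ _ Hf) as H3.
  pose proof (ln_sub_ln_nonneg (INR N) 1 (le_n 1) ltac:(apply le_INR; lia)) as HL.
  pose proof (sum3_div_sq_le N) as HE.
  pose proof (le_INR _ _ (sum_R4_le_Dsum4 N)) as Hc1.
  pose proof (le_INR _ _ (Dsum4_le_sum_R4 N)) as Hc2.
  rewrite !plus_INR, mult_INR in Hc2. simpl (INR 4) in Hc2. cbv beta in *.
  simpl (INR 1) in HL. rewrite ln_1, Rminus_0_r in HL.
  destruct Hf as [Hn _].
  set (c := INR (sum_from_1 R4 N)) in *. set (n := INR N) in *. set (L := ln n) in *.
  assert (Hcu : c <= n * (1 + 3 * L + 3 * (L * L) / 2 + L * L * L / 6)) by lra.
  assert (Hcl : n * (L * L * L / 6 - 3 * (L * L) - 10 * L - 19) <= c) by lra.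
  assert (Hcn : c / n * n = c) by (field; lra).
  apply Rabs_le. simpl pow. split.
  - apply (Rmult_le_reg_r n); [lra |]. nra.
  - apply (Rmult_le_reg_r n); [lra |]. nra.
Qed.

Lemma is_lim_seq_cube_ratio (r a : nat -> R) (C : R) :
  is_lim_seq a p_infty ->
  (forall n, (1 <= n)%nat -> Rabs (r n - a n ^ 3 / 6) <= C * (1 + a n + a n * a n)) ->
  is_lim_seq (fun n => r n / (a n ^ 3 / 6)) 1.
Proof.
  intros Ha Hr.
  set (e n := 6 * C * (/ a n + / a n * / a n + / a n * / a n * / a n)).
  assert (He : is_lim_seq e 0).
  { pose proof (is_lim_seq_inv a p_infty Ha ltac:(discriminate)) as Hv. simpl in Hv.
    replace (Finite 0) with (Finite (6 * C * (0 + 0 * 0 + 0 * 0 * 0))) by (f_equal; ring).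
    apply is_lim_seq_mult'; [apply is_lim_seq_const |].
    apply is_lim_seq_plus'; [apply is_lim_seq_plus' |]; auto;
      repeat apply is_lim_seq_mult'; auto. }
  apply is_lim_seq_le_le_loc with (u := fun n => 1 - e n) (w := fun n => 1 + e n).
  - apply is_lim_seq_spec in Ha. destruct (Ha 1) as [N0 HN0].
    exists (Nat.max N0 1). intros n Hn.
    specialize (HN0 n ltac:(lia)). specialize (Hr n ltac:(lia)).
    assert (Hdiff : r n / (a n ^ 3 / 6) - 1 = 6 * (r n - a n ^ 3 / 6) * (/ a n * / a n * / a n))
      by (field; lra).
    assert (Hbound : 6 * C * (1 + a n + a n * a n) * (/ a n * / a n * / a n) = e n)
      by (unfold e; field; lra).
    assert (0 < / a n * / a n * / a n) by (apply Rmult_lt_0_compat;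
      [apply Rmult_lt_0_compat |]; apply Rinv_0_lt_compat; lra).
    apply Rabs_le_between in Hr. nra.
  - replace 1 with (1 - 0) at 1 by ring. apply is_lim_seq_minus'; [apply is_lim_seq_const | exact He].
  - replace 1 with (1 + 0) at 1 by ring. apply is_lim_seq_plus'; [apply is_lim_seq_const | exact He].
Qed.

Theorem theorem4 :
  is_lim_seq
    (fun N : nat =>
       (INR (sum_from_1 R4 N) / INR N) / (ln (INR N) ^ 3 / 6))
    1.
Proof.
  apply (is_lim_seq_cube_ratio _ (fun N => ln (INR N)) 19).
  - eapply filterlim_comp; [apply is_lim_seq_INR | apply is_lim_ln_p].
  - exact R4_average_cube_error.
Qed.
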